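(* Let $\{c_n\}_{n\in\mathbb Z}$ be complex numbers such that $c_n+c_{-n}\in M(\theta_0)$ for all $n\ge1$ for some $\theta_0\in[0,\pi/2)$, and $\{c_n\}_{n\ge0}\in NBVS$. Let $S_n(x)=\sum_{k=-n}^nc_ke^{ikx}$. If $S_n$ converges uniformly on $\mathbb R$ to a (continuous, $2\pi$-periodic) function $f$, i.e. $\lim_{n\to\infty}\|f-S_n\|=0$ with $\|g\|=\max_x|g(x)|$, then $\lim_{n\to\infty}nc_n=0$.
   Context: For $\theta_0\in[0,\pi/2)$ let $M(\theta_0)=\{z\in\mathbb C: |\arg z|\le\theta_0\}$ (with $0\in M(\theta_0)$). Write $\Delta c_n=c_n-c_{n+1}$. A complex sequence $\mathbf C=\{c_n\}$ belongs to $NBVS$ if there is $\theta_0\in[0,\pi/2)$ with $c_n\in M(\theta_0)$ for all $n\ge1$ and a constant $K(\mathbf C)>0$ such that $\sum_{n=m}^{2m}|\Delta c_n|\le K(\mathbf C)\big(|c_m|+|c_{2m}|\big)$ for all $m\ge1$. *)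

From Stdlib Require Import Reals ZArith.
From Coquelicot Require Import Coquelicot.
Open Scope R_scope.

Definition cexpi (t : R) : C := (cos t, sin t).

(* M(theta0) = { z : |arg z| <= theta0 }, with 0 in M(theta0).
   arg z is the principal argument in (-pi, pi], i.e. the t in (-pi,pi]
   with z = |z| e^{it}; for z = 0 every t qualifies, so 0 is in M. *)
Definition inM (theta0 : R) (z : C) : Prop :=
  exists t : R, - PI < t <= PI /\ Rabs t <= theta0 /\
    z = Cmult (RtoC (Cmod z)) (cexpi t).

Definition Delta (c : nat -> C) (n : nat) : C := Cminus (c n) (c (S n)).

(* NBVS for a sequence {c_n}_{n >= 1} (value at index 0 is irrelevant). *)
Definition NBVS (c : nat -> C) : Prop :=
  exists theta0 : R, 0 <= theta0 < PI / 2 /\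
    (forall n : nat, (1 <= n)%nat -> inM theta0 (c n)) /\
    exists K : R, K > 0 /\
      forall m : nat, (1 <= m)%nat ->
        sum_n_m (fun n => Cmod (Delta c n)) m (2 * m)
          <= K * (Cmod (c m) + Cmod (c (2 * m)%nat)).

Definition Spart (c : Z -> C) (n : nat) (x : R) : C :=
  sum_n_m (fun j : nat =>
      let k := (Z.of_nat j - Z.of_nat n)%Z in
      Cmult (c k) (cexpi (IZR k * x))) 0 (2 * n).

From Pilot Require Import Defs.
From Stdlib Require Import Reals ZArith Lia Lra.
From Coquelicot Require Import Coquelicot.
Open Scope R_scope.

(* The partial sums are uniformly Cauchy, so every block
   S_N - S_n = sum_{n<k<=N} (c_k e^{ikx} + c_{-k} e^{-ikx}) is uniformly small.
   At x = 0 the block is sum (c_k + c_{-k}), whose terms lie in the sector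
   M(theta0), so its modulus controls sum |c_k + c_{-k}|.  At x = pi/(2N) with
   N <= 5n, the imaginary part of the block is at least
   sum 2 sin(kx) Re c_k - sum |c_k + c_{-k}|, where sin(kx) >= sin(pi/10) and
   Re c_k >= cos theta1 |c_k|; hence sum_{n<k<=N} |c_k| -> 0.  Finally NBVS gives
   |c_t| <= (K+1)(|c_m| + |c_{2m}|) for m <= t <= 2m, and averaging over
   t/2 < m <= t yields t |c_t| <= 4(K+1) sum_{t/2<k<=2t} |c_k| -> 0. *)

Ltac fold_Rplus := change (@plus R_AbelianMonoid) with Rplus in *.

(* [ring] only recognises equations stated at type [C], not at the carrier of
   a Coquelicot structure. *)
Ltac C_ring :=
  change (@plus C_AbelianMonoid) with Cplus;
  match goal with |- ?L = ?R => change (@eq C L R) end; ring.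

Lemma sum_n_m_additive {G H : AbelianMonoid} (f : G -> H) :
  (forall u v, f (plus u v) = plus (f u) (f v)) -> f zero = zero ->
  forall (a : nat -> G) n m, f (sum_n_m a n m) = sum_n_m (fun k => f (a k)) n m.
Proof.
  intros Hplus Hzero a n m. induction m as [|m IHm].
  - destruct n as [|n]; [now rewrite !sum_n_n|].
    now rewrite !sum_n_m_zero by lia.
  - destruct (le_lt_dec n (S m)).
    + now rewrite !sum_n_Sm, Hplus, IHm.
    + now rewrite !sum_n_m_zero.
Qed.

Lemma Re_sum_n_m (a : nat -> C) n m : Re (sum_n_m a n m) = sum_n_m (fun k => Re (a k)) n m.
Proof. now apply (sum_n_m_additive (G := C_AbelianMonoid) (H := R_AbelianMonoid)). Qed.

Lemma Im_sum_n_m (a : nat -> C) n m : Im (sum_n_m a n m) = sum_n_m (fun k => Im (a k)) n m.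
Proof. now apply (sum_n_m_additive (G := C_AbelianMonoid) (H := R_AbelianMonoid)). Qed.

Lemma sum_n_m_Rmult_l (r : R) (a : nat -> R) n m :
  sum_n_m (fun k => r * a k) n m = r * sum_n_m a n m.
Proof. exact (sum_n_m_mult_l r a n m). Qed.

Lemma sum_n_m_Rplus (a b : nat -> R) n m :
  sum_n_m (fun k => a k + b k) n m = sum_n_m a n m + sum_n_m b n m.
Proof. exact (sum_n_m_plus a b n m). Qed.

Lemma sum_n_m_le_loc (a b : nat -> R) n m :
  (forall k, (n <= k <= m)%nat -> a k <= b k) -> sum_n_m a n m <= sum_n_m b n m.
Proof.
  intros Hab. rewrite (sum_n_m_ext_loc a (fun k => Rmin (a k) (b k))).
  - apply sum_n_m_le. intros k. apply Rmin_r.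
  - intros k Hk. symmetry. now apply Rmin_left, Hab.
Qed.

Lemma sum_n_m_nonneg (a : nat -> R) n m : (forall k, 0 <= a k) -> 0 <= sum_n_m a n m.
Proof.
  intros Ha. apply Rle_trans with (sum_n_m (fun _ => 0) n m).
  - rewrite sum_n_m_const, Rmult_0_r. apply Rle_refl.
  - now apply sum_n_m_le.
Qed.

Lemma sum_n_m_le_widen (a : nat -> R) n m n' m' :
  (forall k, 0 <= a k) -> (n' <= n)%nat -> (m <= m')%nat ->
  sum_n_m a n m <= sum_n_m a n' m'.
Proof.
  intros Ha Hn Hm. destruct (lt_dec m n) as [Hmn|Hnm].
  { rewrite sum_n_m_zero by exact Hmn. now apply sum_n_m_nonneg. }
  rewrite (sum_n_m_Chasles a n' m m') by lia. fold_Rplus.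
  assert (Hleft : sum_n_m a n m <= sum_n_m a n' m).
  { destruct (Nat.eq_dec n' n) as [->|Hne]; [lra|].
    destruct n as [|p]; [lia|].
    rewrite (sum_n_m_Chasles a n' p m) by lia. fold_Rplus.
    pose proof (sum_n_m_nonneg a n' p Ha). lra. }
  pose proof (sum_n_m_nonneg a (S m) m' Ha). lra.
Qed.

Lemma sum_n_m_even_le (a : nat -> R) n m : (forall k, 0 <= a k) ->
  sum_n_m (fun k => a (2 * k)%nat) n m <= sum_n_m a (2 * n) (2 * m).
Proof.
  intros Ha. induction m as [|m IHm].
  - destruct n as [|n]; [rewrite !sum_n_n; lra|].
    rewrite sum_n_m_zero by lia. now apply sum_n_m_nonneg.
  - destruct (le_lt_dec n (S m)) as [Hn|Hn].
    2: { rewrite sum_n_m_zero by lia. now apply sum_n_m_nonneg. }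
    replace (2 * S m)%nat with (S (S (2 * m))) by lia.
    rewrite sum_n_Sm, (sum_n_Sm a) by lia. fold_Rplus.
    replace (2 * S m)%nat with (S (S (2 * m))) by lia.
    pose proof (sum_n_m_le_widen a (2 * n) (2 * m) (2 * n) (S (2 * m)) Ha (le_n _) (le_S _ _ (le_n _))).
    lra.
Qed.

Lemma im_le_Cmod (z : C) : Rabs (Im z) <= Cmod z.
Proof.
  rewrite <- (Rabs_pos_eq (Cmod z)) by apply Cmod_ge_0.
  apply Rsqr_le_abs_0. rewrite !Rsqr_pow2, Cmod2_alt.
  pose proof (pow2_ge_0 (Re z)). lra.
Qed.

Lemma Cmod_cexpi (t : R) : Cmod (cexpi t) = 1.
Proof.
  unfold Cmod, cexpi; cbn [fst snd].
  rewrite <- sqrt_1, <- (sin2_cos2 t). unfold Rsqr. f_equal. ring.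
Qed.

Lemma inM_cos_Cmod_le_Re (theta0 : R) (z : C) :
  0 <= theta0 < PI / 2 -> inM theta0 z -> cos theta0 * Cmod z <= Re z.
Proof.
  intros Htheta [t [Ht [Hta Hz]]].
  assert (HRe : Re z = Cmod z * cos t) by (rewrite Hz at 1; simpl; ring).
  assert (Hcos : cos t = cos (Rabs t)).
  { destruct (Rle_dec 0 t).
    - now rewrite Rabs_pos_eq.
    - now rewrite Rabs_left, cos_neg by lra. }
  rewrite HRe, Hcos, Rmult_comm. apply Rmult_le_compat_l; [apply Cmod_ge_0|].
  pose proof PI_RGT_0. apply cos_decr_1; try lra. apply Rabs_pos.
Qed.

Lemma sin_PI_div_10_le (k N : nat) : (0 < k)%nat -> (k <= N)%nat -> (N <= 5 * k)%nat ->
  sin (PI / 10) <= sin (INR k * (PI / (2 * INR N))).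
Proof.
  intros Hk HkN HNk. pose proof PI_RGT_0.
  assert (Hk0 : 0 < INR k) by (apply lt_0_INR; lia).
  assert (HkN' : INR k <= INR N) by (apply le_INR; lia).
  assert (HNk' : INR N <= 5 * INR k).
  { replace 5 with (INR 5) by (simpl; ring). rewrite <- mult_INR. apply le_INR. lia. }
  set (r := INR k / INR N).
  assert (Hr : INR k * (PI / (2 * INR N)) = PI / 2 * r) by (unfold r; field; lra).
  assert (HrN : r * INR N = INR k) by (unfold r; field; lra).
  assert (r <= 1) by nra. assert (1 / 5 <= r) by nra.
  rewrite Hr. apply sin_incr_1; nra.
Qed.

Section Harmonics.

Variable c : Z -> C.

Definition fterm (x : R) (k : Z) : C := Cmult (c k) (cexpi (IZR k * x)).

Definition harmonic (x : R) (k : nat) : C :=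
  Cplus (fterm x (Z.of_nat k)) (fterm x (- Z.of_nat k)).

Lemma Spart_succ n x : Spart c (S n) x = Cplus (Spart c n x) (harmonic x (S n)).
Proof.
  change (sum_n_m (fun j => fterm x (Z.of_nat j - Z.of_nat (S n))) 0 (2 * S n) =
    Cplus (sum_n_m (fun j => fterm x (Z.of_nat j - Z.of_nat n)) 0 (2 * n))
          (harmonic x (S n))).
  replace (2 * S n)%nat with (S (S (2 * n))) by lia.
  rewrite sum_n_Sm, sum_Sn_m, <- sum_n_m_S by lia.
  rewrite (sum_n_m_ext (fun j => fterm x (Z.of_nat (S j) - Z.of_nat (S n)))
             (fun j => fterm x (Z.of_nat j - Z.of_nat n))) by (intros j; f_equal; lia).
  unfold harmonic.
  replace (Z.of_nat 0 - Z.of_nat (S n))%Z with (- Z.of_nat (S n))%Z by lia.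
  replace (Z.of_nat (S (S (2 * n))) - Z.of_nat (S n))%Z with (Z.of_nat (S n)) by lia.
  C_ring.
Qed.

Lemma Spart_split n N x : (n <= N)%nat ->
  Spart c N x = Cplus (Spart c n x) (sum_n_m (harmonic x) (S n) N).
Proof.
  induction 1 as [|N HnN IH].
  - rewrite sum_n_m_zero by lia. change (zero : C) with (RtoC 0). C_ring.
  - rewrite Spart_succ, IH, (sum_n_Sm (harmonic x)) by lia. C_ring.
Qed.

Lemma harmonic_0 k : harmonic 0 k = Cplus (c (Z.of_nat k)) (c (- Z.of_nat k)%Z).
Proof.
  unfold harmonic, fterm, cexpi. rewrite !Rmult_0_r, cos_0, sin_0.
  change (1, 0) with (RtoC 1). C_ring.
Qed.

Lemma harmonic_Im_ge x k :
  2 * sin (INR k * x) * Re (c (Z.of_nat k))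
    - Cmod (Cplus (c (Z.of_nat k)) (c (- Z.of_nat k)%Z)) <= Im (harmonic x k).
Proof.
  set (y := INR k * x). set (s := Cplus (c (Z.of_nat k)) (c (- Z.of_nat k)%Z)).
  assert (Hid : Im (harmonic x k) = 2 * sin y * Re (c (Z.of_nat k)) + Im (Cmult s (cexpi (- y)))).
  { unfold harmonic, fterm, cexpi, s, y.
    rewrite opp_IZR, <- INR_IZR_INZ, <- Ropp_mult_distr_l, cos_neg, sin_neg.
    destruct (c (Z.of_nat k)), (c (- Z.of_nat k)%Z). simpl. ring. }
  pose proof (im_le_Cmod (Cmult s (cexpi (- y)))) as Hmod.
  rewrite Cmod_mult, Cmod_cexpi, Rmult_1_r in Hmod.
  apply Rabs_le_between in Hmod. lra.
Qed.

Lemma harmonic_blocks_small (f : R -> C) :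
  (forall eps : R, eps > 0 -> exists N : nat, forall n : nat, (N <= n)%nat ->
     forall x : R, Cmod (Cminus (f x) (Spart c n x)) <= eps) ->
  forall eps, eps > 0 -> exists N0, forall n N x, (N0 <= n <= N)%nat ->
    Cmod (sum_n_m (harmonic x) (S n) N) <= eps.
Proof.
  intros Hunif eps Heps. destruct (Hunif (eps / 2)) as [N0 HN0]; [lra|].
  exists N0. intros n N x Hn.
  pose proof (HN0 n ltac:(lia) x) as Hn'. pose proof (HN0 N ltac:(lia) x) as HN.
  rewrite (Spart_split n N x) in HN by lia.
  set (G := sum_n_m (harmonic x) (S n) N) in *.
  replace G with (Cminus (Cminus (f x) (Spart c n x)) (Cminus (f x) (Cplus (Spart c n x) G)))
    by C_ring.
  eapply Rle_trans; [apply Cmod_triangle|]. rewrite Cmod_opp. lra.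
Qed.

Lemma sum_Cmod_symm_le (theta0 : R) n N :
  0 <= theta0 < PI / 2 ->
  (forall k : nat, (1 <= k)%nat -> inM theta0 (Cplus (c (Z.of_nat k)) (c (- Z.of_nat k)%Z))) ->
  cos theta0 * sum_n_m (fun k => Cmod (Cplus (c (Z.of_nat k)) (c (- Z.of_nat k)%Z))) (S n) N
    <= Cmod (sum_n_m (harmonic 0) (S n) N).
Proof.
  intros Htheta HM. rewrite <- sum_n_m_Rmult_l.
  eapply Rle_trans; [|apply (Rle_trans _ _ _ (Rle_abs _)), re_le_Cmod].
  rewrite Re_sum_n_m. apply sum_n_m_le_loc. intros k Hk.
  rewrite harmonic_0. apply inM_cos_Cmod_le_Re; [exact Htheta | apply HM; lia].
Qed.

Lemma sum_Cmod_le_harmonic_block (theta1 : R) n N :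
  0 <= theta1 < PI / 2 ->
  (forall k : nat, (1 <= k)%nat -> inM theta1 (c (Z.of_nat k))) ->
  (N <= 5 * n)%nat ->
  2 * sin (PI / 10) * cos theta1 * sum_n_m (fun k => Cmod (c (Z.of_nat k))) (S n) N
    <= Cmod (sum_n_m (harmonic (PI / (2 * INR N))) (S n) N)
       + sum_n_m (fun k => Cmod (Cplus (c (Z.of_nat k)) (c (- Z.of_nat k)%Z))) (S n) N.
Proof.
  intros Htheta HM HN. set (x := PI / (2 * INR N)).
  assert (Hcos : 0 < cos theta1) by (apply cos_gt_0; lra).
  rewrite <- sum_n_m_Rmult_l.
  apply Rle_trans with (sum_n_m (fun k => Im (harmonic x k)
     + Cmod (Cplus (c (Z.of_nat k)) (c (- Z.of_nat k)%Z))) (S n) N).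
  - apply sum_n_m_le_loc. intros k Hk.
    pose proof (sin_PI_div_10_le k N ltac:(lia) ltac:(lia) ltac:(lia)) as Hsin.
    pose proof (inM_cos_Cmod_le_Re theta1 _ Htheta (HM k ltac:(lia))) as HRe.
    pose proof (harmonic_Im_ge x k) as HIm.
    pose proof (Cmod_ge_0 (c (Z.of_nat k))).
    assert (0 < sin (PI / 10)) by (pose proof PI_RGT_0; apply sin_gt_0; lra).
    assert (0 <= cos theta1 * Cmod (c (Z.of_nat k))) by nra.
    fold x in Hsin.
    assert (sin (PI / 10) * (cos theta1 * Cmod (c (Z.of_nat k)))
            <= sin (INR k * x) * Re (c (Z.of_nat k))) by nra.
    lra.
  - rewrite sum_n_m_Rplus, <- Im_sum_n_m.
    pose proof (Rle_trans _ _ _ (Rle_abs _) (im_le_Cmod (sum_n_m (harmonic x) (S n) N))).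
    lra.
Qed.

Lemma block_sums_vanish (f : R -> C) (theta0 theta1 : R) :
  0 <= theta0 < PI / 2 ->
  (forall k : nat, (1 <= k)%nat -> inM theta0 (Cplus (c (Z.of_nat k)) (c (- Z.of_nat k)%Z))) ->
  0 <= theta1 < PI / 2 ->
  (forall k : nat, (1 <= k)%nat -> inM theta1 (c (Z.of_nat k))) ->
  (forall eps : R, eps > 0 -> exists N : nat, forall n : nat, (N <= n)%nat ->
     forall x : R, Cmod (Cminus (f x) (Spart c n x)) <= eps) ->
  forall e, e > 0 -> exists N0, forall n N, (N0 <= n)%nat -> (n <= N <= 5 * n)%nat ->
    sum_n_m (fun k => Cmod (c (Z.of_nat k))) (S n) N <= e.
Proof.
  intros Htheta0 HM0 Htheta1 HM1 Hunif e He. pose proof PI_RGT_0.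
  set (C0 := cos theta0). set (C1 := cos theta1). set (d := sin (PI / 10)).
  assert (HC0 : 0 < C0) by (apply cos_gt_0; lra).
  assert (HC1 : 0 < C1) by (apply cos_gt_0; lra).
  assert (Hd : 0 < d) by (apply sin_gt_0; lra).
  (* [eta] is chosen so that [eta + eta / C0 = 2 d C1 e]. *)
  set (eta := 2 * d * C1 * C0 * e / (C0 + 1)).
  assert (Heta : eta > 0) by (unfold eta; apply Rdiv_lt_0_compat; [repeat apply Rmult_lt_0_compat|]; lra).
  destruct (harmonic_blocks_small f Hunif eta Heta) as [N0 HN0].
  exists N0. intros n N Hn HN.
  set (D := sum_n_m (fun k => Cmod (Cplus (c (Z.of_nat k)) (c (- Z.of_nat k)%Z))) (S n) N).
  set (S0 := sum_n_m (fun k => Cmod (c (Z.of_nat k))) (S n) N).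
  assert (HD : C0 * D <= eta).
  { eapply Rle_trans; [apply (sum_Cmod_symm_le theta0 n N Htheta0 HM0)|]. apply HN0. lia. }
  assert (HS : 2 * d * C1 * S0 <= eta + D).
  { eapply Rle_trans; [apply (sum_Cmod_le_harmonic_block theta1 n N Htheta1 HM1); lia|].
    apply Rplus_le_compat_r, HN0. lia. }
  assert (Hkey : C0 * (2 * d * C1 * S0) <= 2 * d * C1 * C0 * e).
  { replace (2 * d * C1 * C0 * e) with (eta * (C0 + 1)) by (unfold eta; field; lra).
    nra. }
  assert (Hpos : 0 < C0 * (2 * d * C1)) by (repeat apply Rmult_lt_0_compat; lra).
  nra.
Qed.

End Harmonics.

Lemma Cmod_sub_le_sum_Delta (b : nat -> C) m t : (m <= t)%nat ->
  Cmod (Cminus (b m) (b (S t))) <= sum_n_m (fun n => Cmod (Defs.Delta b n)) m t.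
Proof.
  induction 1 as [|t Hmt IH].
  - rewrite sum_n_n. apply Rle_refl.
  - rewrite sum_n_Sm by lia. fold_Rplus.
    replace (Cminus (b m) (b (S (S t)))) with (Cplus (Cminus (b m) (b (S t))) (Defs.Delta b (S t)))
      by (unfold Defs.Delta; C_ring).
    eapply Rle_trans; [apply Cmod_triangle|]. lra.
Qed.

Lemma NBVS_Cmod_le (b : nat -> C) (K : R) : 0 <= K ->
  (forall m : nat, (1 <= m)%nat ->
     sum_n_m (fun n => Cmod (Defs.Delta b n)) m (2 * m) <= K * (Cmod (b m) + Cmod (b (2 * m)%nat))) ->
  forall m t, (1 <= m)%nat -> (m <= t <= 2 * m)%nat ->
    Cmod (b t) <= (K + 1) * (Cmod (b m) + Cmod (b (2 * m)%nat)).
Proof.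
  intros HK HNB m t Hm Ht.
  pose proof (Cmod_ge_0 (b m)). pose proof (Cmod_ge_0 (b (2 * m)%nat)).
  assert (Hdiff : Cmod (Cminus (b m) (b t)) <= K * (Cmod (b m) + Cmod (b (2 * m)%nat))).
  { eapply Rle_trans; [|apply HNB, Hm].
    destruct (Nat.eq_dec t m) as [->|Hne].
    - unfold Cminus. rewrite Cplus_opp_r, Cmod_0.
      apply sum_n_m_nonneg. intros; apply Cmod_ge_0.
    - destruct t as [|t]; [lia|].
      eapply Rle_trans; [apply Cmod_sub_le_sum_Delta; lia|].
      apply sum_n_m_le_widen; [intros; apply Cmod_ge_0 | lia | lia]. }
  assert (Cmod (b t) <= Cmod (b m) + Cmod (Cminus (b m) (b t))).
  { replace (b t) with (Cplus (b m) (Copp (Cminus (b m) (b t)))) at 1 by C_ring.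
    eapply Rle_trans; [apply Cmod_triangle|]. rewrite Cmod_opp. lra. }
  nra.
Qed.

Lemma mul_le_block_sum_of_doubling (a : nat -> R) (L : R) :
  (forall k, 0 <= a k) -> 0 <= L ->
  (forall m t, (1 <= m)%nat -> (m <= t <= 2 * m)%nat -> a t <= L * (a m + a (2 * m)%nat)) ->
  forall p t, (2 * p <= t <= 2 * p + 2)%nat ->
    INR t * a t <= 4 * L * sum_n_m a (S p) (2 * t).
Proof.
  intros Ha HL Hdbl p t Ht.
  assert (Havg : INR (t - p) * a t <= L * sum_n_m (fun m => a m + a (2 * m)%nat) (S p) t).
  { replace (INR (t - p) * a t) with (sum_n_m (fun _ => a t) (S p) t)
      by (rewrite sum_n_m_const; f_equal).
    rewrite <- sum_n_m_Rmult_l. apply sum_n_m_le_loc. intros m Hm. apply Hdbl; lia. }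
  assert (Hsplit : sum_n_m (fun m => a m + a (2 * m)%nat) (S p) t <= 2 * sum_n_m a (S p) (2 * t)).
  { rewrite sum_n_m_Rplus.
    pose proof (sum_n_m_le_widen a (S p) t (S p) (2 * t) Ha (le_n _) ltac:(lia)).
    pose proof (sum_n_m_even_le a (S p) t Ha).
    pose proof (sum_n_m_le_widen a (2 * S p) (2 * t) (S p) (2 * t) Ha ltac:(lia) (le_n _)).
    lra. }
  assert (Ht2 : INR t <= 2 * INR (t - p)).
  { replace 2 with (INR 2) by reflexivity. rewrite <- mult_INR. apply le_INR. lia. }
  pose proof (Ha t).
  assert (INR t * a t <= 2 * (INR (t - p) * a t)) by nra.
  assert (L * sum_n_m (fun m => a m + a (2 * m)%nat) (S p) t <= L * (2 * sum_n_m a (S p) (2 * t)))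
    by (apply Rmult_le_compat_l; assumption).
  lra.
Qed.

Theorem lemma2 (c : Z -> C) (f : R -> C) :
  (exists theta0 : R, 0 <= theta0 < PI / 2 /\
     forall n : nat, (1 <= n)%nat ->
       inM theta0 (Cplus (c (Z.of_nat n)) (c (- Z.of_nat n)%Z))) ->
  NBVS (fun n : nat => c (Z.of_nat n)) ->
  (* uniform convergence on R: sup_x |f x - S_n x| -> 0 *)
  (forall eps : R, eps > 0 -> exists N : nat, forall n : nat, (N <= n)%nat ->
     forall x : R, Cmod (Cminus (f x) (Spart c n x)) <= eps) ->
  is_lim_seq (fun n : nat => Cmod (Cmult (RtoC (INR n)) (c (Z.of_nat n)))) 0.
Proof.
  intros [theta0 [Htheta0 HM0]] [theta1 [Htheta1 [HM1 [K [HK HNB]]]]] Hunif.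
  set (a := fun n : nat => Cmod (c (Z.of_nat n))).
  assert (Ha : forall k, 0 <= a k) by (intros; apply Cmod_ge_0).
  pose proof (NBVS_Cmod_le _ K ltac:(lra) HNB) as Hdbl.
  pose proof (block_sums_vanish c f theta0 theta1 Htheta0 HM0 Htheta1 HM1 Hunif) as Hblock.
  apply is_lim_seq_Reals. intros eps Heps.
  destruct (Hblock (eps / (8 * (K + 1)))) as [N0 HN0].
  { apply Rdiv_lt_0_compat; lra. }
  exists (2 * (N0 + 2))%nat. intros t Ht. unfold R_dist.
  rewrite Rminus_0_r, Cmod_mult, Cmod_R, (Rabs_pos_eq (INR t)) by apply pos_INR.
  rewrite Rabs_pos_eq by (apply Rmult_le_pos; [apply pos_INR | apply Cmod_ge_0]).
  destruct (Nat.Even_or_Odd t) as [[p Hp]|[p Hp]];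
    pose proof (mul_le_block_sum_of_doubling a (K + 1) Ha ltac:(lra) Hdbl p t ltac:(lia));
    pose proof (HN0 p (2 * t)%nat ltac:(lia) ltac:(lia));
    assert (4 * (K + 1) * (eps / (8 * (K + 1))) = eps / 2) by (field; lra);
    unfold a in *; nra.
Qed.
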